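(* Let $\varphi:\mathbb{R}^d\to\mathbb{R}^p$ be any feature map and $z_1,\dots,z_N\in\mathbb{R}^d$ training inputs with labels $G=(g_1,\dots,g_N)\in\mathbb{R}^N$, such that the kernel $K=\Phi\Phi^\top\in\mathbb{R}^{N\times N}$ is invertible, where $\Phi\in\mathbb{R}^{N\times p}$ has $i$-th row $\varphi(z_i)^\top$. Let $\Phi_{-1}\in\mathbb{R}^{(N-1)\times p}$ be $\Phi$ with its first row removed, $P_{\Phi_{-1}}$ the orthogonal projector onto the span of the rows of $\Phi_{-1}$, and $P^\perp_{\Phi_{-1}}=I-P_{\Phi_{-1}}$. Then $\|P^\perp_{\Phi_{-1}}\varphi(z_1)\|_2\neq 0$, and for every $z\in\mathbb{R}^d$, $$\mathcal S_{z_1}(z)=\mathcal F_\varphi(z,z_1)\,\mathcal S_{z_1}(z_1),\qquad\text{where }\ \mathcal F_\varphi(z,z_1):=\frac{\varphi(z)^\top P^\perp_{\Phi_{-1}}\varphi(z_1)}{\|P^\perp_{\Phi_{-1}}\varphi(z_1)\|_2^2}.$$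
   Context: Model: $f(z,\theta)=\varphi(z)^\top\theta$, $\theta\in\mathbb{R}^p$. Given an initialization $\theta_0\in\mathbb{R}^p$, the trained parameters are $\theta^*=\theta_0+\Phi^+(G-\Phi\theta_0)$ with $\Phi^+=\Phi^\top K^{-1}$ (the Moore–Penrose inverse). With $Z_{-1},G_{-1}$ the data and labels without the first pair, $\theta^*_{-1}=\theta_0+\Phi_{-1}^+(G_{-1}-\Phi_{-1}\theta_0)$, where $\Phi_{-1}^+=\Phi_{-1}^\top(\Phi_{-1}\Phi_{-1}^\top)^{-1}$. The stability with respect to $z_1$ is the function $\mathcal S_{z_1}(z):=f(z,\theta^* )-f(z,\theta^*_{-1})$. *)

From mathcomp Require Import all_boot all_order all_algebra.
From mathcomp Require Import reals.
Set Implicit Arguments. Unset Strict Implicit. Unset Printing Implicit Defensive.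
Import Order.TTheory GRing.Theory Num.Theory.
Local Open Scope ring_scope.

Section Defs.
Variables (R : realType) (d p : nat).

Definition feat_mx (m : nat) (phi : 'rV[R]_d -> 'cV[R]_p) (Z : 'I_m -> 'rV[R]_d)
  : 'M[R]_(m, p) := \matrix_(i, j) phi (Z i) j 0.

(* Moore-Penrose inverse of a full-row-rank matrix: A^T (A A^T)^{-1}. *)
Definition pinv_rows (m : nat) (A : 'M[R]_(m, p)) : 'M[R]_(p, m) :=
  A^T *m invmx (A *m A^T).

Definition trained (m : nat) (A : 'M[R]_(m, p)) (G : 'cV[R]_m) (theta0 : 'cV[R]_p)
  : 'cV[R]_p := theta0 + pinv_rows A *m (G - A *m theta0).

Definition model (phi : 'rV[R]_d -> 'cV[R]_p) (z : 'rV[R]_d) (theta : 'cV[R]_p) : R :=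
  ((phi z)^T *m theta) 0 0.

Definition drop_first (n : nat) (Z : 'I_n.+1 -> 'rV[R]_d) : 'I_n -> 'rV[R]_d :=
  fun i => Z (lift ord0 i).
Definition drop_first_cV (n : nat) (G : 'cV[R]_n.+1) : 'cV[R]_n :=
  \col_i G (lift ord0 i) 0.

(* Stability with respect to z_1 (index ord0). *)
Definition stability (n : nat) (phi : 'rV[R]_d -> 'cV[R]_p)
  (Z : 'I_n.+1 -> 'rV[R]_d) (G : 'cV[R]_n.+1) (theta0 : 'cV[R]_p) (z : 'rV[R]_d) : R :=
  model phi z (trained (feat_mx phi Z) G theta0)
  - model phi z (trained (feat_mx phi (drop_first Z)) (drop_first_cV G) theta0).

Definition is_orth_proj (m : nat) (P : 'M[R]_p) (A : 'M[R]_(m, p)) : Prop :=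
  [/\ P^T = P, P *m P = P & (P == A)%MS].

Definition norm2 (v : 'cV[R]_p) : R := Num.sqrt ((v^T *m v) 0 0).

End Defs.

From mathcomp Require Import all_boot all_order all_algebra.
From mathcomp Require Import reals.
Import Order.TTheory GRing.Theory Num.Theory.
Local Open Scope ring_scope.
Set Implicit Arguments. Unset Strict Implicit. Unset Printing Implicit Defensive.

(* Let A = feat_mx phi Z, a = phi(z_1) and B = feat_mx phi (drop_first Z), so
   that A is the block matrix (a^T ; B).  Write delta = theta^* - theta^*_{-1}
   for the difference of the two trained parameter vectors; then
   S_{z_1}(z) = phi(z)^T delta, and the theorem says that delta is a multiple of
   v1 = (1 - P) a.  The argument:
   - A A^T invertible over an ordered field means the rows of A are free
     (unitmx_gram); hence so are the rows of B, and B B^T is invertible too.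
   - Both trained vectors interpolate their data, so B delta = 0; and both
     differ from theta_0 by a vector in the row space of A, so delta^T <= A.
   - A vector in the row space of (a^T ; B) killed by B is killed by P, hence
     equals (1 - P) delta, a multiple of (1 - P) a (projC_residual).
   - Since a^T is not in the row space of B (the rows of A are free),
     v1 != 0; and a^T v1 = |v1|^2 because 1 - P is an orthogonal projector. *)

Section SelfDot.
Variable F : realDomainType.

Lemma self_dot_sum k (u : 'rV[F]_k) : (u *m u^T) 0 0 = \sum_j u 0 j ^+ 2.
Proof. by rewrite mxE; apply: eq_bigr => j _; rewrite mxE expr2. Qed.

Lemma self_dot_ge0 k (u : 'rV[F]_k) : 0 <= (u *m u^T) 0 0.
Proof. by rewrite self_dot_sum; apply: sumr_ge0 => j _; exact: sqr_ge0. Qed.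

Lemma self_dot_eq0 k (u : 'rV[F]_k) : ((u *m u^T) 0 0 == 0) = (u == 0).
Proof.
apply/idP/eqP => [|->]; last by rewrite mul0mx mxE.
rewrite self_dot_sum psumr_eq0 => [/allP u0|j _]; last exact: sqr_ge0.
apply/matrixP => i j; rewrite [i]ord1 mxE.
by apply/eqP; rewrite -sqrf_eq0; exact: u0 (mem_index_enum _).
Qed.

End SelfDot.

Lemma unitmx_gram (F : realFieldType) m q (X : 'M[F]_(m, q)) :
  (X *m X^T \in unitmx) = row_free X.
Proof.
rewrite -row_free_unit; apply/idP/idP => [freeG | freeX].
  by rewrite /row_free eqn_leq rank_leq_row -{1}(eqP freeG) mxrankM_maxl.
apply: inj_row_free => y /(congr1 (mulmx^~ y^T)); rewrite mul0mx => yGy.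
apply/eqP; rewrite -(mulmx_free_eq0 _ freeX) -self_dot_eq0.
by rewrite trmx_mul !mulmxA -(mulmxA y) yGy mxE.
Qed.

Lemma row_free_dsub (F : fieldType) n q (u : 'rV[F]_q) (B : 'M[F]_(n, q)) :
  row_free (col_mx u B) -> row_free B.
Proof.
move=> freeA; apply: inj_row_free => y yB.
have : row_mx 0 y *m col_mx u B = 0 by rewrite mul_row_col mul0mx yB addr0.
by move/eqP; rewrite (mulmx_free_eq0 _ freeA) row_mx_eq0 => /andP[_ /eqP].
Qed.

Lemma row_free_top_notin (F : fieldType) n q (u : 'rV[F]_q) (B : 'M[F]_(n, q)) :
  row_free (col_mx u B) -> ~~ (u <= B)%MS.
Proof.
rewrite /row_free -addsmxE => freeA; apply/negP => /addsmx_idPr uB.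
by move: freeA; rewrite uB eqn_leq add1n ltnNge rank_leq_row andbF.
Qed.

Section OrthProj.
Variables (R : realType) (p m : nat) (P : 'M[R]_p) (B : 'M[R]_(m, p)).
Hypothesis projP : is_orth_proj P B.
Let Pperp := 1%:M - P.

Lemma proj_trB : P *m B^T = B^T.
Proof.
case: projP => PT PP /andP[_ /submxP[N ->]].
by rewrite -{1}PT -trmx_mul -mulmxA PP.
Qed.

(* P vanishes on the kernel of B, since the rows of P lie in the rows of B. *)
Lemma proj_ker (x : 'cV[R]_p) : B *m x = 0 -> P *m x = 0.
Proof.
case: projP => _ _ /andP[/submxP[M ->] _] Bx0.
by rewrite -mulmxA Bx0 mulmx0.
Qed.

Lemma projC_trB : Pperp *m B^T = 0.
Proof. by rewrite mulmxBl mul1mx proj_trB subrr. Qed.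

Lemma projC_dot (x : 'cV[R]_p) : x^T *m (Pperp *m x) = (Pperp *m x)^T *m (Pperp *m x).
Proof.
case: projP => PT PP _.
have PperpT : Pperp^T = Pperp by rewrite linearB /= trmx1 PT.
have PperpI : Pperp *m Pperp = Pperp.
  by rewrite mulmxBl mul1mx mulmxBr mulmx1 PP subrr subr0.
by rewrite trmx_mul PperpT -mulmxA (mulmxA Pperp) PperpI.
Qed.

Lemma projC_neq0 (u : 'rV[R]_p) : ~~ (u <= B)%MS -> Pperp *m u^T != 0.
Proof.
case: projP => PT _ /andP[PB _]; apply: contraNneq => Pu0.
have uP : u = u *m P.
  have : u^T = P *m u^T.
    by apply/eqP; rewrite -subr_eq0 -{1}(mul1mx u^T) -mulmxBl Pu0.
  by move/(congr1 trmx); rewrite trmx_mul PT !trmxK.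
by rewrite uP (submx_trans (submxMl _ _) PB).
Qed.

Lemma projC_residual (u : 'rV[R]_p) (x : 'cV[R]_p) :
  (x^T <= col_mx u B)%MS -> B *m x = 0 -> exists c : 'M[R]_1, x = (Pperp *m u^T) *m c.
Proof.
rewrite -addsmxE => /sub_addsmxP[[c w] /= xE] /proj_ker Px0.
exists c^T; have -> : x = Pperp *m x by rewrite mulmxBl mul1mx Px0 subr0.
rewrite -[x]trmxK xE linearD /= !trmx_mul mulmxDr !mulmxA projC_trB mul0mx.
by rewrite addr0.
Qed.

End OrthProj.

Section Trained.
Variables (R : realType) (p m : nat) (A : 'M[R]_(m, p)) (G : 'cV[R]_m) (theta0 : 'cV[R]_p).

Lemma trained_interp : A *m A^T \in unitmx -> A *m trained A G theta0 = G.
Proof.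
move=> unitK; rewrite /trained /pinv_rows mulmxDr !mulmxA mulmxV // mul1mx.
by rewrite addrC subrK.
Qed.

Lemma trained_shift_sub : ((trained A G theta0 - theta0)^T <= A)%MS.
Proof. by rewrite /trained addrC addKr /pinv_rows -mulmxA trmx_mul trmxK submxMl. Qed.

End Trained.

Lemma feat_mx_drop (R : realType) (d p n : nat)
  (phi : 'rV[R]_d -> 'cV[R]_p) (Z : 'I_n.+1 -> 'rV[R]_d) :
  feat_mx phi Z = col_mx (phi (Z ord0))^T (feat_mx phi (drop_first Z)).
Proof.
apply/matrixP => i j; rewrite !mxE; case: splitP => k ik; rewrite !mxE.
  by rewrite [k]ord1; congr (phi (Z _) _ _); apply: val_inj; rewrite /= ik [k]ord1.
by congr (phi (Z _) _ _); apply: val_inj; rewrite /= ik.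
Qed.

Lemma drop_first_cVE (R : realType) (n : nat) (G : 'cV[R]_n.+1) :
  drop_first_cV G = dsubmx (G : 'M_(1 + n, 1)).
Proof. by apply/matrixP => i j; rewrite !mxE [j]ord1; congr (G _ _); apply: val_inj. Qed.

Lemma stabilityE (R : realType) (d p n : nat)
  (phi : 'rV[R]_d -> 'cV[R]_p) (Z : 'I_n.+1 -> 'rV[R]_d) (G : 'cV[R]_n.+1)
  (theta0 : 'cV[R]_p) (z : 'rV[R]_d) :
  stability phi Z G theta0 z
  = ((phi z)^T *m (trained (feat_mx phi Z) G theta0
       - trained (feat_mx phi (drop_first Z)) (drop_first_cV G) theta0)) 0 0.
Proof. by rewrite /stability /model mulmxBr [RHS]mxE [X in _ = _ + X]mxE. Qed.

Lemma trained_diff_residual (R : realType) (d p n : nat)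
  (phi : 'rV[R]_d -> 'cV[R]_p) (Z : 'I_n.+1 -> 'rV[R]_d) (G : 'cV[R]_n.+1)
  (theta0 : 'cV[R]_p) (P : 'M[R]_p) :
  feat_mx phi Z *m (feat_mx phi Z)^T \in unitmx ->
  is_orth_proj P (feat_mx phi (drop_first Z)) ->
  exists c : 'M[R]_1,
    trained (feat_mx phi Z) G theta0
    - trained (feat_mx phi (drop_first Z)) (drop_first_cV G) theta0
    = ((1%:M - P) *m phi (Z ord0)) *m c.
Proof.
move=> unitK projP; have AE := feat_mx_drop phi Z.
set A := feat_mx phi Z in unitK AE *; set B := feat_mx phi (drop_first Z) in projP AE *.
set a := phi (Z ord0) in AE *.
have unitKB : B *m B^T \in unitmx.
  by rewrite unitmx_gram (@row_free_dsub _ _ _ a^T) // -AE -unitmx_gram.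
set tA := trained A G theta0; set tB := trained B (drop_first_cV G) theta0.
have B_diff : B *m (tA - tB) = 0.
  have BtA : B *m tA = dsubmx (G : 'M_(1 + n, 1)).
    by have := mul_col_mx a^T B tA; rewrite -AE trained_interp // => ->; rewrite col_mxKd.
  by rewrite mulmxBr BtA trained_interp // drop_first_cVE subrr.
have diff_row : ((tA - tB)^T <= col_mx a^T B)%MS.
  have -> : tA - tB = (tA - theta0) - (tB - theta0) by rewrite opprB addrA subrK.
  rewrite linearB /= -AE addmx_sub ?eqmx_opp ?trained_shift_sub //.
  by rewrite (submx_trans (trained_shift_sub _ _ _)) // AE -addsmxE addsmxSr.
have [c ->] := projC_residual projP diff_row B_diff.
by exists c; rewrite trmxK.
Qed.

Theorem lemma1 (R : realType) (d p n : nat)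
  (phi : 'rV[R]_d -> 'cV[R]_p) (Z : 'I_n.+1 -> 'rV[R]_d) (G : 'cV[R]_n.+1)
  (theta0 : 'cV[R]_p) (P : 'M[R]_p) :
  feat_mx phi Z *m (feat_mx phi Z)^T \in unitmx ->
  is_orth_proj P (feat_mx phi (drop_first Z)) ->
  let Pperp := 1%:M - P in
  let v1 := Pperp *m phi (Z ord0) in
  norm2 v1 != 0 /\
  forall z : 'rV[R]_d,
    stability phi Z G theta0 z
    = (((phi z)^T *m v1) 0 0 / norm2 v1 ^+ 2) * stability phi Z G theta0 (Z ord0).
Proof.
move=> unitK projP Pperp v1.
have v1_dot : norm2 v1 ^+ 2 = (v1^T *m v1) 0 0.
  by rewrite /norm2 sqr_sqrtr // -{2}[v1]trmxK self_dot_ge0.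
have v1_neq0 : v1 != 0.
  have freeA : row_free (col_mx (phi (Z ord0))^T (feat_mx phi (drop_first Z))).
    by rewrite -feat_mx_drop -unitmx_gram.
  by have := projC_neq0 projP (row_free_top_notin freeA); rewrite trmxK.
have norm_neq0 : norm2 v1 != 0.
  by rewrite -sqrf_eq0 v1_dot -{2}[v1]trmxK self_dot_eq0 trmx_eq0.
have [c diffE] := trained_diff_residual G theta0 unitK projP.
have stabE z : stability phi Z G theta0 z = ((phi z)^T *m v1) 0 0 * c 0 0.
  by rewrite stabilityE diffE mulmxA [LHS]mxE big_ord1.
split=> // z; rewrite !stabE (projC_dot projP) -/v1 -v1_dot.
by rewrite mulrA divfK // expf_neq0.
Qed.
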